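(* Every stratum of $G_{4,2}$ whose polytope $\mu(\overline{\mathcal{O}(X)})$ is different from $\Delta_{4,2}$ consists of exactly one $(\mathbb{C}^* )^4$-orbit.
   Context: $G_{4,2}$ is the complex Grassmann manifold of $2$-planes in $\mathbb{C}^4$, with the action of $(\mathbb{C}^* )^4$ induced from the coordinatewise action on $\mathbb{C}^4$; $\overline{\mathcal{O}(X)}$ is the closure of the $(\mathbb{C}^* )^4$-orbit of $X$. Plücker coordinates $P^{ij}(X)$ ($1\le i<j\le4$) are the $2\times 2$ minors on rows $i,j$ of a $4\times2$ matrix whose columns span $X$; $\delta_{ij}\in\mathbb{R}^4$ has $1$ in positions $i,j$ and $0$ elsewhere; $\Delta_{4,2}$ is the convex hull of the $\delta_{ij}$; $\mu(X)=\sum|P^{ij}(X)|^2\delta_{ij}/\sum|P^{ij}(X)|^2$. Two points $X_1,X_2$ lie in the same stratum iff $\mu(\overline{\mathcal{O}(X_1)})=\mu(\overline{\mathcal{O}(X_2)})$, and this common polytope is called the polytope of the stratum. *)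

From HB Require Import structures.
From mathcomp Require Import all_boot all_order all_algebra.
From mathcomp Require Import reals.
From mathcomp Require Import complex.
Set Implicit Arguments.
Unset Strict Implicit.
Unset Printing Implicit Defensive.
Import Order.TTheory GRing.Theory Num.Theory.
Local Open Scope ring_scope.

Section G42.
Variable R : realType.
Local Notation C := (R[i]).

Definition sqmod (z : C) : R := let: Complex a b := z in a ^+ 2 + b ^+ 2.

(* A point X of G_{4,2} is represented by a 4x2 complex matrix of rank 2 whose
   columns span X.  Two such matrices represent the same plane iff A' = A *m g
   with g in GL_2(C). *)
Definition is_frame (A : 'M[C]_(4,2)) : Prop := \rank A = 2%N.

Definition pluecker (A : 'M[C]_(4,2)) (i j : 'I_4) : C :=
  A i 0 * A j 1 - A j 0 * A i 1.

Definition delta (i j : 'I_4) : 'rV[R]_4 :=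
  \row_k ((k == i) || (k == j))%:R.

Definition mu (A : 'M[C]_(4,2)) : 'rV[R]_4 :=
  (\sum_(i < 4) \sum_(j < 4 | (i < j)%N) sqmod (pluecker A i j))^-1 *:
  \sum_(i < 4) \sum_(j < 4 | (i < j)%N) sqmod (pluecker A i j) *: delta i j.

Definition Delta42 : 'rV[R]_4 -> Prop := fun v =>
  exists lam : 'I_4 -> 'I_4 -> R,
    (forall i j, 0 <= lam i j) /\
    \sum_(i < 4) \sum_(j < 4 | (i < j)%N) lam i j = 1 /\
    v = \sum_(i < 4) \sum_(j < 4 | (i < j)%N) lam i j *: delta i j.

(* action of t in (C^* )^4 (coordinatewise) followed by a change of basis g in GL_2:
   a frame of the plane t.X when A is a frame of X *)
Definition torus_frame (t : 'I_4 -> C) (A : 'M[C]_(4,2)) (g : 'M[C]_2) : 'M[C]_(4,2) :=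
  diag_mx (\row_k t k) *m A *m g.

Definition torus_elt (t : 'I_4 -> C) : Prop := forall k, t k != 0.

Definition in_torus_orbit (A B : 'M[C]_(4,2)) : Prop :=
  exists (t : 'I_4 -> C) (g : 'M[C]_2),
    torus_elt t /\ g \in unitmx /\ B = torus_frame t A g.

Definition mx_cvg (M : nat -> 'M[C]_(4,2)) (B : 'M[C]_(4,2)) : Prop :=
  forall i j (e : R), 0 < e ->
    exists N : nat, forall n : nat, (N <= n)%N -> sqmod (M n i j - B i j) < e.

(* Y (is_frame B) lies in the closure of the orbit of X (is_frame A), for the usual
   (quotient, metrizable) topology of G_{4,2} = {rank-2 frames}/GL_2 : some
   sequence of frames of points of the orbit converges to a frame of Y. *)
Definition in_torus_orbit_closure (A B : 'M[C]_(4,2)) : Prop :=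
  is_frame B /\
  exists (t : nat -> 'I_4 -> C) (g : nat -> 'M[C]_2),
    (forall n, torus_elt (t n) /\ g n \in unitmx) /\
    mx_cvg (fun n => torus_frame (t n) A (g n)) B.

Definition orbit_polytope (A : 'M[C]_(4,2)) : 'rV[R]_4 -> Prop := fun v =>
  exists B, in_torus_orbit_closure A B /\ mu B = v.

End G42.

From HB Require Import structures.
From mathcomp Require Import all_boot all_order all_algebra.
From mathcomp Require Import boolp reals complex topology normedtype realfun.
From mathcomp Require Import lra ring.
Set Implicit Arguments. Unset Strict Implicit. Unset Printing Implicit Defensive.
Import Order.TTheory GRing.Theory Num.Theory.
Import numFieldTopology.Exports numFieldNormedType.Exports.
Local Open Scope ring_scope.

(* The point delta_ij lies in mu(closure of the orbit of X) iff P^ij(X) <> 0: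
   torus limits can only kill Pluecker coordinates, and conversely, in the
   affine chart at (i, j), scaling the two other rows to zero reaches the
   coordinate plane e_i /\ e_j.  Hence points of one stratum have the same
   Pluecker support.

   If all six Pluecker coordinates of X are nonzero, the polytope is the whole
   hypersimplex Delta_{4,2}: in the chart at (i, j), the orbit closure contains
   every plane whose rows k, l are (p, q), (r, s) with p s = kap q r, kap being
   the cross-ratio of X, and an intermediate value argument shows that the
   moduli of the Pluecker coordinates of such planes realise every point of
   Delta_{4,2}.

   So a stratum with polytope different from Delta_{4,2} has a vanishing
   Pluecker coordinate.  Two points with the same support, one coordinate
   vanishing, differ in the chart at (i, j) by a torus element and a rescaling
   of the second column: two rows with all chart entries nonzero are forced to
   be proportional by the vanishing coordinate, so the ratio of their column
   rescalings agrees. *)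

(** * An intermediate value argument on the hypersimplex *)

Section QuadraticRoot.
Variable R : realType.
Implicit Types a m u : R.

Definition qroot a m u : R := (- a + Num.sqrt (a ^+ 2 + 4 * m * u)) / 2.

Lemma qroot_discr_ge0 a m u : 0 <= m -> 0 <= u -> 0 <= a ^+ 2 + 4 * m * u.
Proof. by move=> m0 u0; rewrite addr_ge0 ?sqr_ge0 // !mulr_ge0. Qed.

Lemma normr_le_sqrt_discr a m u : 0 <= m -> 0 <= u ->
  `|a| <= Num.sqrt (a ^+ 2 + 4 * m * u).
Proof.
move=> m0 u0; rewrite -sqrtr_sqr ler_wsqrtr // lerDl.
by rewrite !mulr_ge0.
Qed.

Lemma qroot_ge0 a m u : 0 <= m -> 0 <= u -> 0 <= qroot a m u.
Proof.
move=> m0 u0; have := normr_le_sqrt_discr a m0 u0; have := ler_norm a.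
rewrite /qroot; lra.
Qed.

Lemma addr_qroot_ge0 a m u : 0 <= m -> 0 <= u -> 0 <= a + qroot a m u.
Proof.
move=> m0 u0; have := normr_le_sqrt_discr a m0 u0.
have := ler_norm (- a); rewrite normrN /qroot; lra.
Qed.

Lemma qrootP a m u : 0 <= m -> 0 <= u -> qroot a m u * (a + qroot a m u) = m * u.
Proof.
move=> m0 u0; have := sqr_sqrtr (qroot_discr_ge0 a m0 u0).
rewrite /qroot; set s := Num.sqrt _ => s2.
have -> : (- a + s) / 2 * (a + (- a + s) / 2) = (s ^+ 2 - a ^+ 2) / 4 by field.
by rewrite s2; field.
Qed.

Lemma qroot0 a m : qroot a m 0 = (`|a| - a) / 2.
Proof. by rewrite /qroot mulr0 addr0 sqrtr_sqr addrC. Qed.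

Lemma qroot_lower_bound a e : 0 <= e -> e <= qroot a 1 ((e + `|a|) ^+ 2).
Proof.
move=> e0; have a0 := normr_ge0 a; have := ler_norm a.
have : 2 * (e + `|a|) <= Num.sqrt (a ^+ 2 + 4 * 1 * (e + `|a|) ^+ 2).
  rewrite -[X in X <= _]ger0_norm ?mulr_ge0 ?addr_ge0 // -sqrtr_sqr.
  by rewrite ler_wsqrtr //; have := sqr_ge0 a; nra.
rewrite /qroot; lra.
Qed.

Lemma continuous_qroot a m : continuous (qroot a m).
Proof.
move=> x.
apply: (@continuousM _ _ (fun u => - a + Num.sqrt (a ^+ 2 + 4 * m * u)) (fun=> 2^-1));
  last exact: cst_continuous.
apply: (@continuousD _ _ _ (fun=> - a) (fun u => Num.sqrt (a ^+ 2 + 4 * m * u)));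
  first exact: cst_continuous.
apply: (continuous_comp _ (@sqrt_continuous R _)).
apply: continuousD; first exact: cst_continuous.
by apply: continuousM; [exact: cst_continuous | exact: id].
Qed.

Lemma qroot_sum_ivt (a b c L K e : R) : 0 <= L -> 0 <= K -> 0 <= e ->
  qroot a L 0 + qroot b 1 0 + qroot c K 0 <= e ->
  exists2 u, 0 <= u & qroot a L u + qroot b 1 u + qroot c K u = e.
Proof.
move=> L0 K0 e0 f0; pose U := (e + `|b|) ^+ 2.
have U0 : 0 <= U by exact: sqr_ge0.
have fU : e <= qroot a L U + qroot b 1 U + qroot c K U.
  have := qroot_lower_bound b e0; have := qroot_ge0 a L0 U0; have := qroot_ge0 c K0 U0.
  by rewrite /U; lra.
have [u uI fu] : exists2 u, u \in `[0, U] & qroot a L u + qroot b 1 u + qroot c K u = e.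
  apply: IVT => //; last by rewrite ge_min f0 le_max fU orbT.
  apply: continuous_subspaceT => x.
  apply: (@continuousD _ _ _ (fun u => qroot a L u + qroot b 1 u) (qroot c K));
    last exact: continuous_qroot.
  by apply: (@continuousD _ _ _ (qroot a L) (qroot b 1)); exact: continuous_qroot.
by exists u => //; move: uI; rewrite in_itv /= => /andP[].
Qed.

Lemma hypersimplex_weights (L K vi vj vk vl : R) :
  0 < L -> 0 < K -> 0 <= vk -> 0 <= vl -> vi <= 1 -> vi + vj + vk + vl = 2 ->
  vj <= vi -> vk <= vj -> vl <= vj ->
  exists cij cik cil cjk cjl ckl : R,
   (0 < cij /\ [/\ 0 <= cik, 0 <= cil, 0 <= cjk, 0 <= cjl & 0 <= ckl]) /\
   [/\ cij + cik + cil = vi, cij + cjk + cjl = vj, cik + cjk + ckl = vk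
     & cil + cjl + ckl = vl] /\
   cij * ckl = L * (cik * cjl) /\ cil * cjk = K * (cik * cjl).
Proof.
move=> L0 K0 vk0 vl0 vi1 vs vji vkj vlj.
(* With [u = cik * cjl], the three relations [cij * ckl = L u], [cik * cjl = u],
   [cil * cjk = K u] and the prescribed differences [cij - ckl], [cik - cjl],
   [cil - cjk] determine [ckl], [cjl], [cjk] as quadratic roots in [u]; the
   remaining constraint [cjk + cjl + ckl = 1 - vi] is met by continuity. *)
pose a := (vi + vj - vk - vl) / 2; pose b := (vi + vk - vj - vl) / 2.
pose c := (vi + vl - vj - vk) / 2; pose e := 1 - vi.
have a0 : 0 <= a by rewrite /a; lra.
have [u u0 fu] : exists2 u, 0 <= u & qroot a L u + qroot b 1 u + qroot c K u = e.
  apply: qroot_sum_ivt; [exact: ltW | exact: ltW | rewrite /e; lra |].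
  rewrite !qroot0 (ger0_norm a0).
  have [b0|b0] := lerP 0 b; [rewrite (ger0_norm b0)|rewrite (ltr0_norm b0)];
  (have [c0|c0] := lerP 0 c; [rewrite (ger0_norm c0)|rewrite (ltr0_norm c0)]);
  rewrite /b /c /e in b0 c0 *; lra.
have rA := qrootP a (ltW L0) u0; have rB := qrootP b ler01 u0.
have rC := qrootP c (ltW K0) u0.
have := addr_qroot_ge0 a (ltW L0) u0; have := addr_qroot_ge0 b ler01 u0.
have := addr_qroot_ge0 c (ltW K0) u0.
have := qroot_ge0 a (ltW L0) u0; have := qroot_ge0 b ler01 u0.
have := qroot_ge0 c (ltW K0) u0.
move: fu rA rB rC.
set x := qroot a L u; set y := qroot b 1 u; set z := qroot c K u.
move=> fu rA rB rC z0 y0 x0 cz0 by0 ax0; rewrite mul1r in rB.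
exists (a + x), (b + y), (c + z), z, y, x.
split; [split=> //|split; [split|split]].
- rewrite lt_neqAle ax0 andbT; apply/eqP => ax.
  have [x_0 a_0] : x = 0 /\ a = 0 by split; lra.
  have u_0 : u = 0.
    by move: rA; rewrite x_0 mul0r => /esym /eqP; rewrite mulf_eq0 gt_eqF //= => /eqP.
  have [b_0 c_0] : b = 0 /\ c = 0 by rewrite /b /c; rewrite /a in a_0; split; lra.
  by move: fu; rewrite /y /z u_0 !qroot0 b_0 c_0 x_0 normr0 /e; rewrite /a in a_0; lra.
- rewrite /a /b /c /e in fu *; lra.
- rewrite /a /b /c /e in fu *; lra.
- rewrite /a /b /c /e in fu *; lra.
- rewrite /a /b /c /e in fu *; lra.
- by rewrite mulrC rA [X in _ = L * X]mulrC rB.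
- by rewrite mulrC rC [X in _ = K * X]mulrC rB.
Qed.

End QuadraticRoot.

(** * Pluecker coordinates and affine charts *)

Section Pluecker.
Variable R : realType.
Local Notation C := R[i].
Implicit Types (A B : 'M[C]_(4,2)) (z : C).

Lemma sqmod_ge0 z : 0 <= sqmod z.
Proof. by case: z => a b; rewrite /sqmod addr_ge0 ?sqr_ge0. Qed.

Lemma sqmod_eq0 z : (sqmod z == 0) = (z == 0).
Proof.
case: z => a b; rewrite /sqmod paddr_eq0 ?sqr_ge0 // !expf_eq0 /=.
by rewrite eq_complex.
Qed.

Lemma sqmod_gt0 z : z != 0 -> 0 < sqmod z.
Proof. by move=> z0; rewrite lt0r sqmod_eq0 z0 sqmod_ge0. Qed.

Lemma sqmodM z1 z2 : sqmod (z1 * z2) = sqmod z1 * sqmod z2.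
Proof. by case: z1 => a b; case: z2 => c d; rewrite /sqmod /=; ring. Qed.

Lemma sqmodN z : sqmod (- z) = sqmod z.
Proof. by case: z => a b; rewrite /sqmod /= !sqrrN. Qed.

Lemma sqmodV z : sqmod z^-1 = (sqmod z)^-1.
Proof.
case: z => a b; rewrite /sqmod /=.
have [n0|n0] := eqVneq (a ^+ 2 + b ^+ 2) 0.
  by rewrite n0 invr0 !mulr0 oppr0 expr0n addr0.
by field.
Qed.

Lemma sqmod_real (r : R) : sqmod r%:C%C = r ^+ 2.
Proof. by rewrite /sqmod /= expr0n addr0. Qed.

Lemma sqmod0 : sqmod 0 = 0 :> R.
Proof. by rewrite (sqmod_real 0) expr0n. Qed.

Lemma sqmod1 : sqmod 1 = 1 :> R.
Proof. by rewrite (sqmod_real 1) expr1n. Qed.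

Lemma ord2P (c : 'I_2) : c = 0 \/ c = 1.
Proof. by case: c => [[|[|n]] Hc] //; [left|right]; apply: val_inj. Qed.

Lemma mulmx2E m n (M : 'M[C]_(m,2)) (N : 'M[C]_(2,n)) i c :
  (M *m N) i c = M i 0 * N 0 c + M i 1 * N 1 c.
Proof.
rewrite mxE !big_ord_recr big_ord0 /= add0r.
by congr (M i _ * N _ c + M i _ * N _ c); apply: val_inj.
Qed.

Lemma pluecker_swap A i j : pluecker A j i = - pluecker A i j.
Proof. by rewrite /pluecker; ring. Qed.

Lemma pluecker_ii A i : pluecker A i i = 0.
Proof. by rewrite /pluecker mulrC subrr. Qed.

Lemma pluecker_mulmx A (N : 'M[C]_2) i j :
  pluecker (A *m N) i j = pluecker A i j * (N 0 0 * N 1 1 - N 0 1 * N 1 0).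
Proof. by rewrite /pluecker !mulmx2E; ring. Qed.

Lemma pluecker_diag_mulmx A (t : 'I_4 -> C) i j :
  pluecker (diag_mx (\row_k t k) *m A) i j = t i * t j * pluecker A i j.
Proof. by rewrite /pluecker mul_diag_mx !mxE; ring. Qed.

Lemma pluecker_torus_frame t A g i j : pluecker (torus_frame t A g) i j =
  t i * t j * pluecker A i j * (g 0 0 * g 1 1 - g 0 1 * g 1 0).
Proof. by rewrite /torus_frame pluecker_mulmx pluecker_diag_mulmx. Qed.

Definition rowpair A (i j : 'I_4) : 'M[C]_2 :=
  \matrix_(r < 2, c < 2) A (if r == 0 then i else j) c.

(* The affine chart at [(i, j)]: the frame of the same plane whose rows [i] and
   [j] are [(1, 0)] and [(0, 1)]. *)
Definition chart A (i j : 'I_4) : 'M[C]_(4,2) :=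
  \matrix_(m < 4, c < 2)
    ((if c == 0 then pluecker A m j else pluecker A i m) / pluecker A i j).

Lemma chartE A i j m c : chart A i j m c =
  (if c == 0 then pluecker A m j else pluecker A i m) / pluecker A i j.
Proof. by rewrite mxE. Qed.

Lemma chart_rowpairK A i j : pluecker A i j != 0 -> chart A i j *m rowpair A i j = A.
Proof.
move=> nz; apply/matrixP => m c; rewrite mulmx2E !mxE /=.
by case: (ord2P c) => ->; rewrite /pluecker /= in nz *; field.
Qed.

Lemma rowpair_unit A i j : pluecker A i j != 0 -> rowpair A i j \in unitmx.
Proof.
move=> nz.
pose N : 'M[C]_2 := \matrix_(r < 2, c < 2)
  ((if r == 0 then (if c == 0 then A j 1 else - A i 1)
    else (if c == 0 then - A j 0 else A i 0)) / pluecker A i j).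
suff /mulmx1_unit[] : rowpair A i j *m N = 1%:M by [].
apply/matrixP => r c; rewrite mulmx2E !mxE.
by case: (ord2P r) => ->; case: (ord2P c) => -> /=; rewrite /pluecker in nz *; field.
Qed.

Lemma mulmx_invmx_rowpair A i j : pluecker A i j != 0 ->
  A *m invmx (rowpair A i j) = chart A i j.
Proof. by move=> nz; rewrite -{1}(chart_rowpairK nz) mulmxK // rowpair_unit. Qed.

Lemma pluecker_chart A i j x y : pluecker A i j != 0 ->
  pluecker (chart A i j) x y = pluecker A x y / pluecker A i j.
Proof.
move=> nz; have := pluecker_mulmx (chart A i j) (rowpair A i j) x y.
rewrite chart_rowpairK // => ->.
have -> : rowpair A i j 0 0 * rowpair A i j 1 1 - rowpair A i j 0 1 * rowpair A i j 1 0
  = pluecker A i j by rewrite !mxE /pluecker /=; ring.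
by field.
Qed.

Lemma pluecker_neq0_frame A i j : pluecker A i j != 0 -> is_frame A.
Proof.
move=> nz; apply/eqP; rewrite eqn_leq rank_leq_col /=.
pose E : 'M[C]_(2,4) := \matrix_(r < 2, m < 4) (m == if r == 0 then i else j)%:R.
have EA : E *m A = rowpair A i j.
  apply/matrixP => r c; rewrite !mxE (bigD1 (if r == 0 then i else j)) //=.
  rewrite mxE eqxx mul1r big1 ?addr0 // => m /negbTE mr.
  by rewrite mxE mr mul0r.
by have := mxrankM_maxr E A; rewrite EA (mxrank_unit (rowpair_unit nz)).
Qed.

Lemma frame_pluecker_neq0 A : is_frame A -> exists i j, pluecker A i j != 0.
Proof.
move=> fr.
suff /existsP[i /existsP[j nz]] : [exists i, exists j, pluecker A i j != 0] by exists i, j.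
apply: contraT => /existsPn P0.
have {}P0 i j : pluecker A i j = 0 by apply/eqP/negPn/(existsPn (P0 i)).
have /row_fullP[B BA1] : row_full A by rewrite -col_leq_rank fr.
have [[r c] /= Arc | A0] := pickP (fun rc : 'I_4 * 'I_2 => A rc.1 rc.2 != 0);
  last first.
  have A_0 : A = 0.
    by apply/matrixP => r c; move: (A0 (r, c)) => /= /negbFE/eqP ->; rewrite mxE.
  by move: BA1; rewrite A_0 mulmx0 => /matrixP/(_ 0 0)/eqP; rewrite !mxE eq_sym oner_eq0.
pose v : 'cV[C]_2 := \col_(c' < 2) (if c' == 0 then A r 1 else - A r 0).
have Av : A *m v = 0.
  by apply/matrixP => m c'; rewrite mulmx2E !mxE /=; have := P0 m r; rewrite /pluecker => <-; ring.
have : v = 0 by rewrite -[v]mul1mx -BA1 -mulmxA Av mulmx0.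
move/matrixP; case: (ord2P c) Arc => -> Arc.
- by move/(_ 1 0); rewrite !mxE /= => /eqP; rewrite oppr_eq0 (negbTE Arc).
- by move/(_ 0 0); rewrite !mxE /= => /eqP; rewrite (negbTE Arc).
Qed.

End Pluecker.

(** * Complex sequences and torus orbit closures *)

Section ComplexSequences.
Variable R : realType.
Local Notation C := R[i].
Local Notation normc := (@Normc.normc R).
Implicit Types (u v : nat -> C) (l c : C).

Definition cvgC u l := forall e : R, 0 < e ->
  exists N, forall n, (N <= n)%N -> sqmod (u n - l) < e.

Lemma sqmod_normc c : sqmod c = normc c ^+ 2.
Proof. by case: c => a b; rewrite /= sqr_sqrtr // addr_ge0 ?sqr_ge0. Qed.

Lemma normc_ge0 c : 0 <= normc c.
Proof. by case: c => a b; rewrite /= sqrtr_ge0. Qed.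

Lemma cvgC_normcP u l : cvgC u l <-> forall e : R, 0 < e ->
  exists N, forall n, (N <= n)%N -> normc (u n - l) < e.
Proof.
split=> h e e0.
- have [N hN] := h (e ^+ 2) (exprn_gt0 2 e0); exists N => n /hN.
  by rewrite sqmod_normc ltr_pXn2r ?nnegrE ?normc_ge0 ?ltW.
- have [N hN] : exists N, forall n, (N <= n)%N -> normc (u n - l) < Num.sqrt e.
    by apply: h; rewrite sqrtr_gt0.
  exists N => n /hN hn; rewrite sqmod_normc.
  have <- : Num.sqrt e ^+ 2 = e by rewrite sqr_sqrtr ?ltW.
  by rewrite ltr_pXn2r ?nnegrE ?normc_ge0 ?sqrtr_ge0.
Qed.

Lemma cvgC_cst c : cvgC (fun=> c) c.
Proof. by move=> e e0; exists 0%N => n _; rewrite subrr sqmod0. Qed.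

Lemma eq_cvgC u v l : (forall n, u n = v n) -> cvgC u l -> cvgC v l.
Proof. by move=> uv hu e /hu [N hN]; exists N => n /hN; rewrite uv. Qed.

Lemma cvgCD u v l1 l2 : cvgC u l1 -> cvgC v l2 -> cvgC (fun n => u n + v n) (l1 + l2).
Proof.
move=> /cvgC_normcP hu /cvgC_normcP hv; apply/cvgC_normcP => e e0.
have e2 : 0 < e / 2 by rewrite divr_gt0.
have [N1 h1] := hu _ e2; have [N2 h2] := hv _ e2.
exists (maxn N1 N2) => n; rewrite geq_max => /andP[/h1 a1 /h2 a2].
have -> : u n + v n - (l1 + l2) = (u n - l1) + (v n - l2) by ring.
by apply: le_lt_trans (le_normcD _ _) _; lra.
Qed.

Lemma cvgCM u v l1 l2 : cvgC u l1 -> cvgC v l2 -> cvgC (fun n => u n * v n) (l1 * l2).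
Proof.
move=> /cvgC_normcP hu /cvgC_normcP hv; apply/cvgC_normcP => e e0.
have n1 := normc_ge0 l1; have n2 := normc_ge0 l2.
have e2 : 0 < e / 2 by rewrite divr_gt0.
have n11 : 0 < normc l1 + 1 by rewrite ltr_wpDl.
have n21 : 0 < normc l2 + 1 by rewrite ltr_wpDl.
have [N1 h1] := hu _ (divr_gt0 e2 n21).
have m0 : 0 < Num.min 1 (e / 2 / (normc l1 + 1)) by rewrite lt_min ltr01 divr_gt0.
have [N2 h2] := hv _ m0.
exists (maxn N1 N2) => n; rewrite geq_max => /andP[/h1 a1 /h2].
rewrite lt_min => /andP[a2 a3].
rewrite ltr_pdivlMr // in a1; rewrite ltr_pdivlMr // in a3.
have -> : u n * v n - l1 * l2 = (u n - l1) * v n + l1 * (v n - l2) by ring.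
apply: le_lt_trans (le_normcD _ _) _; rewrite !Normc.normcM.
have vn : normc (v n) <= normc l2 + 1.
  have -> : v n = l2 + (v n - l2) by ring.
  by apply: le_trans (le_normcD _ _) _; rewrite lerD2l ltW.
have := normc_ge0 (u n - l1); have := normc_ge0 (v n - l2); nra.
Qed.

Lemma cvgC_invn : cvgC (fun n => (n.+1)%:R^-1) 0.
Proof.
apply/cvgC_normcP => e e0; exists (Num.bound e^-1) => n hn.
have n0 : 0 < n.+1%:R :> R by rewrite ltr0n.
rewrite subr0 Normc.normcV normcMn Normc.normc1 -[X in X < _]mul1r.
rewrite ltr_pdivrMr // -ltr_pdivrMl // mulr1.
have ie : 0 <= e^-1 by rewrite invr_ge0 ltW.
apply: lt_le_trans (archi_boundP ie) _.
by rewrite ler_nat ltnW.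
Qed.

Lemma cvgC0_uniq u l : (forall n, u n = 0) -> cvgC u l -> l = 0.
Proof.
move=> u0 /cvgC_normcP hu; apply: Normc.eq0_normc; apply/eqP.
rewrite eq_le normc_ge0 andbT; apply/ler_addgt0Pr => e e0; rewrite add0r.
have [N /(_ N (leqnn N))] := hu e e0.
by rewrite u0 sub0r normcN => /ltW.
Qed.

Definition nzapprox c n : C := if c != 0 then c else (n.+1)%:R^-1.

Lemma nzapprox_neq0 c n : nzapprox c n != 0.
Proof. by rewrite /nzapprox; case: ifP => // _; rewrite invr_eq0 pnatr_eq0. Qed.

Lemma cvgC_nzapprox c : cvgC (nzapprox c) c.
Proof.
rewrite /nzapprox; have [->|c0] := eqVneq c 0; first exact: cvgC_invn.
exact: cvgC_cst.
Qed.

Lemma singular2_limit_lead (P Q Rr S : C) : P != 0 -> P * S = Q * Rr ->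
  exists x y z : nat -> C,
    (forall n, [/\ x n != 0, y n != 0 & z n != 0]) /\
    [/\ cvgC x P, cvgC (fun n => x n * z n) Q, cvgC y Rr & cvgC (fun n => y n * z n) S].
Proof.
move=> P0 PS; exists (fun=> P), (nzapprox Rr), (nzapprox (Q / P)).
split; first by move=> n; rewrite !nzapprox_neq0.
split; first exact: cvgC_cst.
- rewrite [X in cvgC _ X](_ : Q = P * (Q / P)); last by rewrite mulrC divfK.
  by apply: cvgCM; [exact: cvgC_cst|exact: cvgC_nzapprox].
- exact: cvgC_nzapprox.
- have -> : S = Rr * (Q / P) by apply: (mulfI P0); rewrite PS; field.
  by apply: cvgCM; exact: cvgC_nzapprox.
Qed.

Lemma singular2_limit (P Q Rr S : C) : P * S = Q * Rr ->
  exists x y z : nat -> C,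
    (forall n, [/\ x n != 0, y n != 0 & z n != 0]) /\
    [/\ cvgC x P, cvgC (fun n => x n * z n) Q, cvgC y Rr & cvgC (fun n => y n * z n) S].
Proof.
move=> PS; have [P0|P0] := eqVneq P 0; last exact: singular2_limit_lead.
have [R0|R0] := eqVneq Rr 0.
  exists (fun n => nzapprox Q n / n.+1%:R), (fun n => nzapprox S n / n.+1%:R),
    (fun n => n.+1%:R).
  split; first by move=> n; rewrite !mulf_neq0 ?nzapprox_neq0 ?invr_eq0 ?pnatr_eq0.
  rewrite P0 R0; split.
  - by rewrite -(mulr0 Q); apply: cvgCM; [exact: cvgC_nzapprox|exact: cvgC_invn].
  - by apply: eq_cvgC (cvgC_nzapprox Q) => n; rewrite divfK ?pnatr_eq0.
  - by rewrite -(mulr0 S); apply: cvgCM; [exact: cvgC_nzapprox|exact: cvgC_invn].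
  - by apply: eq_cvgC (cvgC_nzapprox S) => n; rewrite divfK ?pnatr_eq0.
have [y [x [z [xyz0 [cy cyz cx cxz]]]]] : exists y x z : nat -> C,
    (forall n, [/\ y n != 0, x n != 0 & z n != 0]) /\
    [/\ cvgC y Rr, cvgC (fun n => y n * z n) S, cvgC x P & cvgC (fun n => x n * z n) Q].
  by apply: singular2_limit_lead => //; rewrite mulrC -PS mulrC.
by exists x, y, z; split=> // n; have [] := xyz0 n.
Qed.

End ComplexSequences.

Section OrbitClosure.
Variable R : realType.
Local Notation C := R[i].
Implicit Types A B Y : 'M[C]_(4,2).

Lemma cvgC_pluecker (M : nat -> 'M[C]_(4,2)) B i j : mx_cvg M B ->
  cvgC (fun n => pluecker (M n) i j) (pluecker B i j).
Proof.
move=> MB; rewrite /pluecker.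
apply: (@eq_cvgC _ (fun n => M n i 0 * M n j 1 + (-1) * (M n j 0 * M n i 1))).
  by move=> n; ring.
have -> : B i 0 * B j 1 - B j 0 * B i 1 = B i 0 * B j 1 + (-1) * (B j 0 * B i 1) by ring.
by apply: cvgCD; [|apply: cvgCM; first exact: cvgC_cst]; apply: cvgCM; exact: MB.
Qed.

Lemma orbit_closure_pluecker0 A B i j : in_torus_orbit_closure A B ->
  pluecker A i j = 0 -> pluecker B i j = 0.
Proof.
move=> [_ [t [g [_ cvgB]]]] A0.
apply: (@cvgC0_uniq _ (fun n => pluecker (torus_frame (t n) A (g n)) i j)).
  by move=> n; rewrite pluecker_torus_frame A0 mulr0 mul0r.
exact: cvgC_pluecker.
Qed.

Lemma diag_mx_unit n (d : 'rV[C]_n.+1) : (forall c, d 0 c != 0) -> diag_mx d \in unitmx.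
Proof.
move=> d0; rewrite unitmxE det_diag unitfE; apply/prodf_neq0 => c _; exact: d0.
Qed.

Lemma scale2_unit (z : C) : z != 0 ->
  diag_mx (\row_(c < 2) if c == 0 then 1 else z) \in unitmx.
Proof. by move=> z0; apply: diag_mx_unit => c; rewrite mxE; case: ifP; rewrite ?oner_eq0. Qed.

(* Scaling the second column by [z n] is a change of basis of the plane. *)
Lemma orbit_closure_chart A i j (s : nat -> 'I_4 -> C) (z : nat -> C) Y :
  pluecker A i j != 0 -> is_frame Y ->
  (forall n m, s n m != 0) -> (forall n, z n != 0) ->
  (forall m, cvgC (fun n => s n m * chart A i j m 0) (Y m 0)) ->
  (forall m, cvgC (fun n => s n m * chart A i j m 1 * z n) (Y m 1)) ->
  in_torus_orbit_closure A Y.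
Proof.
move=> nz fY s0 z0 cvg0 cvg1; split => //.
pose D n := diag_mx (\row_(c < 2) if c == 0 then 1 else z n).
exists s, (fun n => invmx (rowpair A i j) *m D n); split.
  move=> n; split=> //.
  by rewrite unitmx_mul unitmx_inv rowpair_unit // scale2_unit.
move=> m c; apply: (@eq_cvgC _ (fun n => s n m * chart A i j m c * (if c == 0 then 1 else z n))).
  move=> n; rewrite /torus_frame mulmxA -(mulmxA _ A) mulmx_invmx_rowpair //.
  by rewrite mul_diag_mx mul_mx_diag !mxE.
case: (ord2P c) => -> /=; last exact: cvg1.
by apply: eq_cvgC (cvg0 m) => n; rewrite mulr1.
Qed.

End OrbitClosure.

(** * Moment map and vertices *)

Definition o0 : 'I_4 := @Ordinal 4 0 isT.
Definition o1 : 'I_4 := @Ordinal 4 1 isT.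
Definition o2 : 'I_4 := @Ordinal 4 2 isT.
Definition o3 : 'I_4 := @Ordinal 4 3 isT.

Lemma ord4P (i : 'I_4) : [\/ i = o0, i = o1, i = o2 | i = o3].
Proof.
case: i => [[|[|[|[|n]]]] Hi] //.
- by constructor 1; apply: val_inj.
- by constructor 2; apply: val_inj.
- by constructor 3; apply: val_inj.
- by constructor 4; apply: val_inj.
Qed.

Lemma sum4E (V : zmodType) (G : 'I_4 -> V) : \sum_(i < 4) G i = G o0 + G o1 + G o2 + G o3.
Proof.
rewrite !big_ord_recr big_ord0 /= add0r.
by congr (G _ + G _ + G _ + G _); apply: val_inj.
Qed.

Definition pairsum (V : zmodType) (F : 'I_4 -> 'I_4 -> V) :=
  \sum_(i < 4) \sum_(j < 4 | (i < j)%N) F i j.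

Lemma pairsumE (V : zmodType) (F : 'I_4 -> 'I_4 -> V) :
  pairsum F = F o0 o1 + F o0 o2 + F o0 o3 + F o1 o2 + F o1 o3 + F o2 o3.
Proof.
rewrite /pairsum sum4E !(big_mkcond (fun j : 'I_4 => _ < j)%N) !sum4E /=.
by rewrite !addr0 !add0r !addrA.
Qed.

Section Uniq4.
Variables i j k l : 'I_4.
Hypothesis ijkl : uniq [:: i; j; k; l].

Lemma uniq4_eqF :
  [/\ (i == j) = false, (i == k) = false, (i == l) = false, (j == k) = false
    & [/\ (j == l) = false, (k == l) = false, (j == i) = false, (k == i) = false
    & [/\ (l == i) = false, (k == j) = false, (l == j) = false & (l == k) = false]]].
Proof.
move: ijkl; rewrite /= !inE !negb_or !andbT.
case/and3P => /and3P[/negbTE ij /negbTE ik /negbTE il] /andP[/negbTE jk /negbTE jl] /negbTE kl.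
by rewrite (eq_sym j i) (eq_sym k i) (eq_sym l i) (eq_sym k j) (eq_sym l j) (eq_sym l k)
  ij ik il jk jl kl.
Qed.

Lemma uniq4_cover m : [|| m == i, m == j, m == k | m == l].
Proof.
move: ijkl.
by case: (ord4P i) => ->; case: (ord4P j) => ->; case: (ord4P k) => ->;
   case: (ord4P l) => ->; case: (ord4P m) => ->.
Qed.

Lemma pairsum_uniq4 (V : comPzRingType) (F : 'I_4 -> 'I_4 -> V) :
  (forall x y, F x y = F y x) ->
  pairsum F = F i j + F i k + F i l + F j k + F j l + F k l.
Proof.
move=> Fsym; rewrite pairsumE.
have F10 := Fsym o1 o0; have F20 := Fsym o2 o0; have F30 := Fsym o3 o0.
have F21 := Fsym o2 o1; have F31 := Fsym o3 o1; have F32 := Fsym o3 o2.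
move: ijkl.
by case: (ord4P i) => ->; case: (ord4P j) => ->; case: (ord4P k) => ->;
   case: (ord4P l) => -> // _; rewrite ?F10 ?F20 ?F30 ?F21 ?F31 ?F32; ring.
Qed.

End Uniq4.

Lemma uniq4_ex (i j : 'I_4) : i != j -> exists k l, uniq [:: i; j; k; l].
Proof.
case: (ord4P i) => ->; case: (ord4P j) => -> // _.
all: first [ by exists o0, o1 | by exists o0, o2 | by exists o0, o3
           | by exists o1, o2 | by exists o1, o3 | by exists o2, o3 ].
Qed.

Lemma sum_uniq4 (V : comPzRingType) (f : 'I_4 -> V) i j k l : uniq [:: i; j; k; l] ->
  \sum_(m < 4) f m = f i + f j + f k + f l.
Proof.
rewrite sum4E.
by case: (ord4P i) => ->; case: (ord4P j) => ->; case: (ord4P k) => ->;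
   case: (ord4P l) => -> // _; ring.
Qed.

Section MomentMap.
Variable R : realType.
Local Notation C := R[i].
Implicit Types A B X Y : 'M[C]_(4,2).

Definition pweight A (x y : 'I_4) : R := sqmod (pluecker A x y).

Lemma pweight_sym A x y : pweight A x y = pweight A y x.
Proof. by rewrite /pweight pluecker_swap sqmodN. Qed.

Lemma pweight_ge0 A x y : 0 <= pweight A x y.
Proof. exact: sqmod_ge0. Qed.

Lemma pairsum_pweight_gt0 A : is_frame A -> 0 < pairsum (pweight A).
Proof.
case/frame_pluecker_neq0 => i [j nz].
have ij : i != j by apply: contraNneq nz => ->; rewrite pluecker_ii.
have [k [l ijkl]] := uniq4_ex ij.
rewrite (pairsum_uniq4 ijkl (pweight_sym A)).
have := sqmod_gt0 nz; rewrite -/(pweight A i j).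
have := pweight_ge0 A; move=> w0.
by have := w0 i k; have := w0 i l; have := w0 j k; have := w0 j l; have := w0 k l; lra.
Qed.

Lemma mu_coord A m : mu A 0 m =
  (pairsum (pweight A))^-1 * pairsum (fun x y => pweight A x y * delta R x y 0 m).
Proof.
rewrite /mu mxE /pairsum; congr (_ * _).
rewrite summxE; apply: eq_bigr => x _; rewrite summxE; apply: eq_bigr => y _.
by rewrite !mxE.
Qed.

Lemma mu_uniq4 A i j k l : uniq [:: i; j; k; l] ->
  let w := pweight A in let S := pairsum w in
  [/\ mu A 0 i = (w i j + w i k + w i l) / S, mu A 0 j = (w i j + w j k + w j l) / S,
      mu A 0 k = (w i k + w j k + w k l) / S & mu A 0 l = (w i l + w j l + w k l) / S].
Proof.
move=> ijkl w S.
have [e1 e2 e3 e4 [e5 e6 e7 e8 [e9 e10 e11 e12]]] := uniq4_eqF ijkl.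
have wdsym m x y : w x y * delta R x y 0 m = w y x * delta R y x 0 m.
  by rewrite /w pweight_sym !mxE orbC.
by split; rewrite mu_coord (pairsum_uniq4 ijkl (wdsym _)) !mxE !eqxx
  ?e1 ?e2 ?e3 ?e4 ?e5 ?e6 ?e7 ?e8 ?e9 ?e10 ?e11 ?e12 /= mulrC; congr (_ / _); ring.
Qed.

Lemma mu_in_Delta42 A : is_frame A -> Delta42 (mu A).
Proof.
move/pairsum_pweight_gt0 => S0.
exists (fun x y => pweight A x y / pairsum (pweight A)); split.
  by move=> x y; rewrite divr_ge0 ?pweight_ge0 // ltW.
split.
  change (pairsum (fun x y => pweight A x y / pairsum (pweight A)) = 1).
  by rewrite pairsumE -!mulrDl -pairsumE divff // gt_eqF.
rewrite /mu scaler_sumr; apply: eq_bigr => x _; rewrite scaler_sumr.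
by apply: eq_bigr => y _; rewrite scalerA mulrC.
Qed.

Definition std_frame (i j k l : 'I_4) (p q r s : C) : 'M[C]_(4,2) :=
  \matrix_(m < 4, c < 2)
    if m == i then (c == 0)%:R else if m == j then (c == 1)%:R
    else if m == k then (if c == 0 then p else q) else (if c == 0 then r else s).

Section StdFrame.
Variables (i j k l : 'I_4) (p q r s : C).
Hypothesis ijkl : uniq [:: i; j; k; l].
Local Notation Y := (std_frame i j k l p q r s).

Lemma std_frame_rows :
  [/\ forall c, Y i c = (c == 0)%:R, forall c, Y j c = (c == 1)%:R,
      Y k 0 = p /\ Y k 1 = q & Y l 0 = r /\ Y l 1 = s].
Proof.
have [e1 e2 e3 e4 [e5 e6 e7 e8 [e9 e10 e11 e12]]] := uniq4_eqF ijkl.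
by split; [move=> c|move=> c|split|split]; rewrite !mxE ?eqxx ?e7 ?e8 ?e9 ?e10 ?e11 ?e12.
Qed.

Lemma pluecker_std_frame :
  [/\ pluecker Y i j = 1, pluecker Y i k = q, pluecker Y i l = s
    & [/\ pluecker Y j k = - p, pluecker Y j l = - r & pluecker Y k l = p * s - q * r]].
Proof.
have [Yi Yj [Yk0 Yk1] [Yl0 Yl1]] := std_frame_rows.
by rewrite /pluecker !Yi !Yj Yk0 Yk1 Yl0 Yl1 /=; split; [ring|ring|ring|split; ring].
Qed.

Lemma std_frame_is_frame : is_frame Y.
Proof.
have [Pij _ _ _] := pluecker_std_frame.
by apply: (@pluecker_neq0_frame _ _ i j); rewrite Pij oner_eq0.
Qed.

Lemma mu_std_frame :
  let S := 1 + sqmod q + sqmod s + sqmod p + sqmod r + sqmod (p * s - q * r) in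
  [/\ mu Y 0 i = (1 + sqmod q + sqmod s) / S, mu Y 0 j = (1 + sqmod p + sqmod r) / S,
      mu Y 0 k = (sqmod q + sqmod p + sqmod (p * s - q * r)) / S
    & mu Y 0 l = (sqmod s + sqmod r + sqmod (p * s - q * r)) / S].
Proof.
have [Pij Pik Pil [Pjk Pjl Pkl]] := pluecker_std_frame.
have [mi mj mk ml] := mu_uniq4 Y ijkl.
rewrite (pairsum_uniq4 ijkl (pweight_sym Y)) /pweight Pij Pik Pil Pjk Pjl Pkl
  !sqmodN sqmod1 in mi mj mk ml.
by split.
Qed.

End StdFrame.

Lemma chart_row1 A i j c : pluecker A i j != 0 -> chart A i j i c = (c == 0)%:R.
Proof. by move=> nz; rewrite chartE pluecker_ii; case: ifP; rewrite ?mul0r ?divff. Qed.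

Lemma chart_row2 A i j c : pluecker A i j != 0 -> chart A i j j c = (c == 1)%:R.
Proof.
move=> nz; rewrite chartE pluecker_ii.
by case: (ord2P c) => -> /=; rewrite ?mul0r ?divff.
Qed.

Section CoordinatePlane.
Variables (i j k l : 'I_4).
Hypothesis ijkl : uniq [:: i; j; k; l].
Local Notation E := (std_frame i j k l 0 0 0 0).

Lemma coordinate_plane_in_orbit_closure X : pluecker X i j != 0 ->
  in_torus_orbit_closure X E.
Proof.
move=> nz; have [Yi Yj _ _] := std_frame_rows 0 0 0 0 ijkl.
pose t n m : C := if (m == i) || (m == j) then 1 else n.+1%:R^-1.
have t0 n m : t n m != 0 by rewrite /t; case: ifP; rewrite ?oner_eq0 ?invr_eq0 ?pnatr_eq0.
have cvg_other m c : m != i -> m != j -> cvgC (fun n => t n m * chart X i j m c * 1) (E m c).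
  move=> /negbTE mi /negbTE mj.
  have -> : E m c = 0 by rewrite mxE mi mj; do 2 case: ifP.
  rewrite -(mul0r (chart X i j m c)) -[X in cvgC _ X]mulr1 /t mi mj.
  by apply: cvgCM; [apply: cvgCM; [exact: cvgC_invn|exact: cvgC_cst]|exact: cvgC_cst].
have cvg_ij m c : (m == i) || (m == j) ->
    cvgC (fun n => t n m * chart X i j m c * 1) (E m c).
  rewrite /t => /orP[/eqP->|/eqP->]; rewrite ?eqxx ?orbT ?Yi ?Yj ?chart_row1 ?chart_row2 //;
    by apply: eq_cvgC (cvgC_cst _) => n; rewrite mul1r mulr1.
apply: (orbit_closure_chart (z := fun=> 1) nz (std_frame_is_frame 0 0 0 0 ijkl) t0).
- by move=> n; rewrite oner_eq0.
- move=> m; apply: eq_cvgC (_ : cvgC (fun n => t n m * chart X i j m 0 * 1) _) => [n|].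
    by rewrite mulr1.
  by have [mij|/norP[]] := boolP ((m == i) || (m == j)); [exact: cvg_ij|exact: cvg_other].
- move=> m.
  by have [mij|/norP[]] := boolP ((m == i) || (m == j)); [exact: cvg_ij|exact: cvg_other].
Qed.

Lemma mu_coordinate_plane : mu E = delta R i j.
Proof.
have [e1 e2 e3 e4 [e5 e6 e7 e8 [e9 e10 e11 e12]]] := uniq4_eqF ijkl.
have [mi mj mk ml] := mu_std_frame 0 0 0 0 ijkl.
rewrite mulr0 subrr sqmod0 !addr0 divr1 ?mul0r in mi mj mk ml.
apply/matrixP => r m; rewrite (ord1 r).
by case/or4P: (uniq4_cover ijkl m) => /eqP ->;
  rewrite ?mi ?mj ?mk ?ml mxE ?eqxx ?e1 ?e2 ?e3 ?e4 ?e5 ?e6 ?e7 ?e8 ?e9 ?e10 ?e11 ?e12.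
Qed.

End CoordinatePlane.

Lemma delta_in_orbit_polytope X i j : i != j -> pluecker X i j != 0 ->
  orbit_polytope X (delta R i j).
Proof.
move=> ij nz; have [k [l ijkl]] := uniq4_ex ij.
exists (std_frame i j k l 0 0 0 0).
by split; [exact: coordinate_plane_in_orbit_closure | exact: mu_coordinate_plane].
Qed.

Lemma orbit_polytope_delta_pluecker X i j : i != j ->
  orbit_polytope X (delta R i j) -> pluecker X i j != 0.
Proof.
move=> ij [B [XB muB]]; apply/negP => /eqP Xij0.
have Bij0 := orbit_closure_pluecker0 XB Xij0.
have [k [l ijkl]] := uniq4_ex ij.
have [e1 e2 e3 e4 [e5 e6 e7 e8 [e9 e10 e11 e12]]] := uniq4_eqF ijkl.
have S0 := pairsum_pweight_gt0 XB.1.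
have [_ _ mk ml] := mu_uniq4 B ijkl.
rewrite muB !mxE e8 e10 e9 e11 in mk ml.
move: mk ml => /esym/eqP; rewrite mulf_eq0 invr_eq0 (gt_eqF S0) orbF => /eqP mk.
move=> /esym/eqP; rewrite mulf_eq0 invr_eq0 (gt_eqF S0) orbF => /eqP ml.
rewrite (pairsum_uniq4 ijkl (pweight_sym B)) {1}/pweight Bij0 sqmod0 in S0.
have w0 := pweight_ge0 B.
by have := w0 i k; have := w0 i l; have := w0 j k; have := w0 j l; have := w0 k l; lra.
Qed.

Lemma orbit_polytope_delta X i j : i != j ->
  orbit_polytope X (delta R i j) <-> pluecker X i j != 0.
Proof.
move=> ij; split; first exact: orbit_polytope_delta_pluecker.
exact: delta_in_orbit_polytope.
Qed.

End MomentMap.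

(** * Points with the same Pluecker support *)

Lemma rescale_pairs (F : fieldType) (I : Type) (a b a' b' : I -> F) (tau : F) :
  tau != 0 -> (forall m, (a' m == 0) = (a m == 0)) -> (forall m, (b' m == 0) = (b m == 0)) ->
  (forall m, a m != 0 -> b m != 0 -> b' m * a m = tau * a' m * b m) ->
  exists t : I -> F, (forall m, t m != 0) /\ forall m, a' m = t m * a m /\ b' m = t m * b m * tau.
Proof.
move=> tau0 za zb ab.
exists (fun m => if a m != 0 then a' m / a m else if b m != 0 then b' m / (tau * b m) else 1).
split=> m.
  have [am|] := boolP (a m != 0); first by rewrite mulf_neq0 ?invr_eq0 ?za.
  have [bm|_ _] := boolP (b m != 0); last exact: oner_neq0.
  by rewrite mulf_neq0 ?invr_eq0 ?mulf_neq0 ?zb.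
have za' : a m = 0 -> a' m = 0 by move/eqP; rewrite -za => /eqP.
have zb' : b m = 0 -> b' m = 0 by move/eqP; rewrite -zb => /eqP.
have [am|/negPn/eqP am] := boolP (a m != 0).
  split; first by rewrite divfK.
  have [bm|/negPn/eqP bm] := boolP (b m != 0); last by rewrite bm zb' // !mulr0 mul0r.
  by apply: (mulIf am); rewrite ab //; field.
rewrite am za' // mulr0; split=> //.
have [bm|/negPn/eqP bm] := boolP (b m != 0); last by rewrite bm zb' // mulr0 mul0r.
by field; rewrite tau0 bm.
Qed.

Section SameSupport.
Variable R : realType.
Local Notation C := R[i].
Implicit Types A B : 'M[C]_(4,2).

Lemma pluecker_eq0_uniq4 A i j k l x y : uniq [:: i; j; k; l] ->
  x != y -> pluecker A x y = 0 ->
  pluecker A k l = 0 \/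
  pluecker A i j * pluecker A i k * pluecker A i l * pluecker A j k * pluecker A j l = 0.
Proof.
move=> ijkl + xy0; have yx0 : pluecker A y x = 0 by rewrite pluecker_swap xy0 oppr0.
move: xy0 yx0.
case/or4P: (uniq4_cover ijkl x) => /eqP->; case/or4P: (uniq4_cover ijkl y) => /eqP->;
  rewrite ?eqxx // => h h' _;
  first [by left; rewrite ?h ?h' | by right; rewrite ?h ?h' ?mulr0 ?mul0r].
Qed.

Section Chart.
Variables (A B : 'M[C]_(4,2)) (i j : 'I_4).
Hypotheses (Aij : pluecker A i j != 0) (Bij : pluecker B i j != 0).
Local Notation a m := (chart A i j m 0).
Local Notation b m := (chart A i j m 1).
Local Notation a' m := (chart B i j m 0).
Local Notation b' m := (chart B i j m 1).

Lemma chart_neq0 m c : (chart A i j m c != 0) =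
  (if c == 0 then pluecker A m j != 0 else pluecker A i m != 0).
Proof. by rewrite chartE mulf_eq0 invr_eq0 (negbTE Aij) orbF; case: ifP. Qed.

Lemma rescaled_chart_orbit (t : 'I_4 -> C) (tau : C) :
  (forall m, t m != 0) -> tau != 0 ->
  (forall m, a' m = t m * a m /\ b' m = t m * b m * tau) -> in_torus_orbit A B.
Proof.
move=> t0 tau0 ab.
pose D := diag_mx (\row_(c < 2) if c == 0 then 1 else tau).
exists t, (invmx (rowpair A i j) *m D *m rowpair B i j); split=> //; split.
  by rewrite !unitmx_mul unitmx_inv !rowpair_unit // scale2_unit.
rewrite /torus_frame -{1}(chart_rowpairK Bij) !mulmxA; congr (_ *m _).
rewrite -(mulmxA _ A) mulmx_invmx_rowpair //.
apply/matrixP => m c; have [a'E b'E] := ab m.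
by case: (ord2P c) => ->; rewrite ?a'E ?b'E mul_mx_diag mul_diag_mx !mxE /= ?mulr1.
Qed.

Hypothesis supp : forall x y, (pluecker A x y == 0) = (pluecker B x y == 0).

Lemma chart_eq0 m c : (chart B i j m c == 0) = (chart A i j m c == 0).
Proof. by rewrite !chartE !mulf_eq0 !invr_eq0 (negbTE Aij) (negbTE Bij) !orbF; case: ifP. Qed.

Hypothesis degenerate : exists x y, x != y /\ pluecker A x y = 0.

(* Two rows with all chart entries nonzero are proportional in both charts, since
   the vanishing Pluecker coordinate can only be the one on these two rows. *)
Lemma chart_ratio_eq m m0 : a m != 0 -> b m != 0 -> a m0 != 0 -> b m0 != 0 ->
  b' m * a m * (a' m0 * b m0) = b' m0 * a m0 * (a' m * b m).
Proof.
move=> am bm am0 bm0; have [<-|mm0] := eqVneq m0 m; first by ring.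
have bi : b i = 0 by rewrite chart_row1.
have aj : a j = 0 by rewrite chart_row2.
have ij : i != j by apply: contraNneq Aij => ->; rewrite pluecker_ii.
have neq_i x : b x != 0 -> i != x by move=> bx; apply: contraNneq bx => <-; rewrite bi.
have neq_j x : a x != 0 -> j != x by move=> ax; apply: contraNneq ax => <-; rewrite aj.
have ijmm0 : uniq [:: i; j; m; m0].
  by rewrite /= !inE !negb_or ij !neq_i // !neq_j // eq_sym mm0.
have [x [y [xy xy0]]] := degenerate.
have Amm0 : pluecker A m m0 = 0.
  have Pi z : b z != 0 -> pluecker A i z != 0 by rewrite chart_neq0.
  have Pj z : a z != 0 -> pluecker A j z != 0.
    by rewrite chart_neq0 pluecker_swap oppr_eq0.
  case: (pluecker_eq0_uniq4 ijmm0 xy xy0) => // /eqP.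
  by rewrite !mulf_eq0 (negbTE Aij) (negbTE (Pi _ bm)) (negbTE (Pi _ bm0))
    (negbTE (Pj _ am)) (negbTE (Pj _ am0)).
have Bmm0 : pluecker B m m0 = 0 by apply/eqP; rewrite -supp Amm0.
have cross (X : 'M[C]_(4,2)) : pluecker X i j != 0 -> pluecker X m m0 = 0 ->
    chart X i j m 0 * chart X i j m0 1 = chart X i j m0 0 * chart X i j m 1.
  move=> Xij Xmm0; apply/eqP; rewrite -subr_eq0.
  by have := pluecker_chart m m0 Xij; rewrite Xmm0 mul0r /pluecker => <-.
have eA := cross A Aij Amm0; have eB := cross B Bij Bmm0.
have am' : a' m != 0 by rewrite chart_eq0.
have am0' : a' m0 != 0 by rewrite chart_eq0.
have -> : b m0 = a m0 * b m / a m by rewrite -eA; field.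
have -> : b' m0 = a' m0 * b' m / a' m by rewrite -eB; field.
by field; rewrite am am'.
Qed.

Lemma chart_rescaled : exists (t : 'I_4 -> C) (tau : C),
  [/\ forall m, t m != 0, tau != 0 & forall m, a' m = t m * a m /\ b' m = t m * b m * tau].
Proof.
pose tau := if [pick m | (a m != 0) && (b m != 0)] is Some m0
  then b' m0 * a m0 / (a' m0 * b m0) else 1.
have tau0 : tau != 0.
  rewrite /tau; case: pickP => [m0 /andP[am0 bm0]|_]; last exact: oner_neq0.
  by rewrite !mulf_neq0 ?invr_eq0 ?mulf_neq0 ?chart_eq0.
have ratio m : a m != 0 -> b m != 0 -> b' m * a m = tau * a' m * b m.
  move=> am bm; rewrite /tau; case: pickP => [m0 /andP[am0 bm0]|/(_ m)]; last by rewrite am bm.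
  have am0' : a' m0 != 0 by rewrite chart_eq0.
  apply: (mulIf (mulf_neq0 am0' bm0)); rewrite chart_ratio_eq //.
  by field; rewrite am0' bm0.
have [t [t0 tab]] := rescale_pairs tau0 (chart_eq0 ^~ 0) (chart_eq0 ^~ 1) ratio.
by exists t, tau.
Qed.

End Chart.

Lemma same_support_orbit A B : is_frame A ->
  (forall x y, (pluecker A x y == 0) = (pluecker B x y == 0)) ->
  (exists x y, x != y /\ pluecker A x y = 0) -> in_torus_orbit A B.
Proof.
move=> /frame_pluecker_neq0[i [j Aij]] supp degenerate.
have Bij : pluecker B i j != 0 by rewrite -supp.
have [t [tau [t0 tau0 tab]]] := chart_rescaled Aij Bij supp degenerate.
exact: (rescaled_chart_orbit Aij Bij t0 tau0 tab).
Qed.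

End SameSupport.

(** * Points with no vanishing Pluecker coordinate *)

Section Generic.
Variable R : realType.
Local Notation C := R[i].
Implicit Types A Y : 'M[C]_(4,2).

Lemma Delta42_coord (v : 'rV[R]_4) : Delta42 v ->
  (forall m, 0 <= v 0 m <= 1) /\ \sum_(m < 4) v 0 m = 2.
Proof.
move=> [lam [lam0 [lam1 ->]]].
have coordE m : (\sum_(x < 4) \sum_(y < 4 | (x < y)%N) lam x y *: delta R x y) 0 m =
    pairsum (fun x y => lam x y * delta R x y 0 m).
  rewrite summxE; apply: eq_bigr => x _; rewrite summxE.
  by apply: eq_bigr => y _; rewrite !mxE.
move: lam1; rewrite -[LHS]/(pairsum lam) pairsumE => lam1.
have := lam0 o0 o1; have := lam0 o0 o2; have := lam0 o0 o3.
have := lam0 o1 o2; have := lam0 o1 o3; have := lam0 o2 o3.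
split; last by rewrite sum4E !coordE !pairsumE !mxE /=; lra.
by move=> m; case: (ord4P m) => ->; rewrite coordE pairsumE !mxE /=; apply/andP; split; lra.
Qed.

Lemma exists_sorted4 (f : 'I_4 -> R) : exists i j k l, uniq [:: i; j; k; l] /\
  [/\ f j <= f i, f k <= f j & f l <= f j].
Proof.
have [i _ fi] := @arg_maxP _ _ _ o0 xpredT f isT.
pose j0 := if i == o0 then o1 else o0.
have j0i : j0 != i by rewrite /j0; case: (i =P o0) => [->|/eqP]; rewrite // eq_sym.
have [j ji fj] := @arg_maxP _ _ _ j0 (fun x => x != i) f j0i.
have ij : i != j by rewrite eq_sym.
have [k [l ijkl]] := uniq4_ex ij.
have [_ _ _ _ [_ _ _ ki [li _ _ _]]] := uniq4_eqF ijkl.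
exists i, j, k, l; split=> //.
by split; [exact: fi | apply: fj; rewrite ki | apply: fj; rewrite li].
Qed.

Lemma cross_ratio_entries (kap : C) (al be ga de : R) :
  0 <= al -> 0 <= be -> 0 <= ga -> 0 <= de -> al * de = sqmod kap * (be * ga) ->
  exists p q r s : C, [/\ sqmod p = al, sqmod q = be, sqmod r = ga, sqmod s = de
    & p * s = kap * (q * r)].
Proof.
move=> al0 be0 ga0 de0 rel.
have sqmod_sqrt x : 0 <= x -> sqmod (Num.sqrt x)%:C%C = x.
  by move=> x0; rewrite sqmod_real sqr_sqrtr.
pose q : C := (Num.sqrt be)%:C%C; pose r : C := (Num.sqrt ga)%:C%C.
have [al_0|al_neq0] := eqVneq al 0.
  exists 0, q, r, (Num.sqrt de)%:C%C; rewrite !sqmod_sqrt // sqmod0 al_0 mul0r.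
  split=> //; apply/esym/eqP; rewrite !mulf_eq0 -!sqmod_eq0 !sqmod_sqrt //.
  by move: rel; rewrite al_0 mul0r => /esym/eqP; rewrite !mulf_eq0.
pose p : C := (Num.sqrt al)%:C%C.
have p0 : p != 0 by rewrite -sqmod_eq0 sqmod_sqrt.
exists p, q, r, (kap * (q * r) / p); rewrite !sqmod_sqrt //; split=> //.
  apply: (mulfI al_neq0); rewrite !sqmodM sqmodV !sqmod_sqrt // rel; field.
  by rewrite al_neq0.
by rewrite mulrC divfK.
Qed.

Lemma mu_std_frame_weights i j k l (p q r s : C) (cij cik cil cjk cjl ckl : R) :
  uniq [:: i; j; k; l] -> 0 < cij -> cij + cik + cil + cjk + cjl + ckl = 1 ->
  sqmod q = cik / cij -> sqmod s = cil / cij -> sqmod p = cjk / cij ->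
  sqmod r = cjl / cij -> sqmod (p * s - q * r) = ckl / cij ->
  let Y := std_frame i j k l p q r s in
  [/\ mu Y 0 i = cij + cik + cil, mu Y 0 j = cij + cjk + cjl,
      mu Y 0 k = cik + cjk + ckl & mu Y 0 l = cil + cjl + ckl].
Proof.
move=> ijkl cij0 c1 hq hs hp hr hps Y.
have [-> -> -> ->] := mu_std_frame p q r s ijkl; rewrite hq hs hp hr hps.
have cij_neq0 : cij != 0 by rewrite gt_eqF.
have -> : 1 + cik / cij + cil / cij + cjk / cij + cjl / cij + ckl / cij =
    (cij + cik + cil + cjk + cjl + ckl) / cij by field.
rewrite c1 div1r.
by split; field.
Qed.

Section GenericChart.
Variables (A : 'M[C]_(4,2)) (i j k l : 'I_4).
Hypotheses (ijkl : uniq [:: i; j; k; l]) (Aij : pluecker A i j != 0).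
Local Notation a m := (chart A i j m 0).
Local Notation b m := (chart A i j m 1).
Hypotheses (ak : a k != 0) (bk : b k != 0) (al : a l != 0) (bl : b l != 0).
(* The cross-ratio of the four rows, which is invariant under the torus. *)
Local Notation kap := (a k * b l / (b k * a l)).

Lemma cross_ratio_neq0 : kap != 0.
Proof. by rewrite !mulf_neq0 ?invr_eq0 ?mulf_neq0. Qed.

Lemma cross_ratio_neq1 : pluecker A k l != 0 -> kap - 1 != 0.
Proof.
move=> Akl; have -> : kap - 1 = pluecker A k l / pluecker A i j / (b k * a l).
  by rewrite -pluecker_chart // /pluecker; field; rewrite bk al.
by rewrite !mulf_neq0 // invr_neq0 // mulf_neq0.
Qed.

Lemma std_frame_in_orbit_closure (p q r s : C) : p * s = kap * (q * r) ->
  in_torus_orbit_closure A (std_frame i j k l p q r s).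
Proof.
move=> ps.
have rel : p / a k * (s / b l) = q / b k * (r / a l).
  transitivity (p * s / (a k * b l)); first by field; rewrite ak bl.
  by rewrite ps; field; rewrite ak bk al bl.
have [x [y [z [xyz0 [cx cxz cy cyz]]]]] := singular2_limit rel.
have [e1 e2 e3 e4 [e5 e6 e7 e8 [e9 e10 e11 e12]]] := uniq4_eqF ijkl.
have [Yi Yj [Yk0 Yk1] [Yl0 Yl1]] := std_frame_rows p q r s ijkl.
pose t n m := if m == i then 1 else if m == j then (z n)^-1 else if m == k then x n else y n.
apply: (orbit_closure_chart (s := t) (z := z) Aij (std_frame_is_frame p q r s ijkl)).
- move=> n m; have [x0 y0 z0] := xyz0 n; rewrite /t.
  by do ![case: ifP => _]; rewrite ?oner_eq0 ?invr_eq0.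
- by move=> n; case: (xyz0 n).
- move=> m; case/or4P: (uniq4_cover ijkl m) => /eqP ->;
    rewrite /t ?eqxx ?e7 ?e8 ?e9 ?e10 ?e11 ?e12.
  + by rewrite Yi chart_row1 //; apply: eq_cvgC (cvgC_cst _) => n; rewrite mul1r.
  + by rewrite Yj chart_row2 //; apply: eq_cvgC (cvgC_cst _) => n; rewrite mulr0.
  + by rewrite Yk0 -[p](divfK ak); apply: cvgCM => //; exact: cvgC_cst.
  + by rewrite Yl0 -[r](divfK al); apply: cvgCM => //; exact: cvgC_cst.
- move=> m; case/or4P: (uniq4_cover ijkl m) => /eqP ->;
    rewrite /t ?eqxx ?e7 ?e8 ?e9 ?e10 ?e11 ?e12.
  + by rewrite Yi chart_row1 //; apply: eq_cvgC (cvgC_cst _) => n; rewrite mulr0 mul0r.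
  + rewrite Yj chart_row2 //; apply: eq_cvgC (cvgC_cst _) => n.
    by have [_ _ z0] := xyz0 n; rewrite mulr1 mulVf.
  + rewrite Yk1 -[q](divfK bk); apply: (eq_cvgC _ (cvgCM cxz (cvgC_cst (b k)))).
    by move=> n; rewrite mulrAC.
  + rewrite Yl1 -[s](divfK bl); apply: (eq_cvgC _ (cvgCM cyz (cvgC_cst (b l)))).
    by move=> n; rewrite mulrAC.
Qed.

Lemma orbit_closure_weights (cij cik cil cjk cjl ckl : R) :
  0 < cij -> [/\ 0 <= cik, 0 <= cil, 0 <= cjk, 0 <= cjl & 0 <= ckl] ->
  cij + cik + cil + cjk + cjl + ckl = 1 ->
  cij * ckl = sqmod (kap - 1) * (cik * cjl) -> cil * cjk = sqmod kap * (cik * cjl) ->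
  exists2 Y, in_torus_orbit_closure A Y &
  [/\ mu Y 0 i = cij + cik + cil, mu Y 0 j = cij + cjk + cjl,
      mu Y 0 k = cik + cjk + ckl & mu Y 0 l = cil + cjl + ckl].
Proof.
move=> cij0 [cik0 cil0 cjk0 cjl0 ckl0] csum relL relK.
have cij_neq0 : cij != 0 by rewrite gt_eqF.
have [p [q [r [s [sp sq sr ss ps]]]]] :
    exists p q r s : C, [/\ sqmod p = cjk / cij, sqmod q = cik / cij, sqmod r = cjl / cij,
      sqmod s = cil / cij & p * s = kap * (q * r)].
  apply: cross_ratio_entries; rewrite ?divr_ge0 ?(ltW cij0) //.
  transitivity (cil * cjk / (cij * cij)); first by field.
  by rewrite relK; field.
have sps : sqmod (p * s - q * r) = ckl / cij.
  have -> : p * s - q * r = (kap - 1) * (q * r) by rewrite ps; ring.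
  rewrite !sqmodM sq sr; transitivity (sqmod (kap - 1) * (cik * cjl) / (cij * cij)).
    by field.
  by rewrite -relL; field.
exists (std_frame i j k l p q r s); first exact: std_frame_in_orbit_closure.
exact: mu_std_frame_weights.
Qed.

End GenericChart.

Lemma generic_orbit_polytope A : (forall x y, x != y -> pluecker A x y != 0) ->
  orbit_polytope A = @Delta42 R.
Proof.
move=> gen; apply/funext => v; apply/propext; split.
  by move=> [B [[fB _] <-]]; exact: mu_in_Delta42.
move=> /Delta42_coord[v01 v2].
have [i [j [k [l [ijkl [vji vkj vlj]]]]]] := exists_sorted4 (fun m => v 0 m).
have [e1 e2 e3 e4 [e5 e6 e7 e8 [e9 e10 e11 e12]]] := uniq4_eqF ijkl.
have Aij := gen i j (negbT e1).
have ak : chart A i j k 0 != 0 by rewrite chart_neq0 //= gen ?e10.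
have al : chart A i j l 0 != 0 by rewrite chart_neq0 //= gen ?e11.
have bk : chart A i j k 1 != 0 by rewrite chart_neq0 //= gen ?e2.
have bl : chart A i j l 1 != 0 by rewrite chart_neq0 //= gen ?e3.
have L0 := sqmod_gt0 (cross_ratio_neq1 Aij bk al (gen k l (negbT e6))).
have K0 := sqmod_gt0 (cross_ratio_neq0 ak bk al bl).
have /andP[_ vi1] := v01 i; have /andP[vk0 _] := v01 k; have /andP[vl0 _] := v01 l.
have vsum : v 0 i + v 0 j + v 0 k + v 0 l = 2 by rewrite -(sum_uniq4 _ ijkl).
have [cij [cik [cil [cjk [cjl [ckl [[cij0 c0] [[vi vj vk vl] [relL relK]]]]]]]]] :=
  hypersimplex_weights L0 K0 vk0 vl0 vi1 vsum vji vkj vlj.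
have csum : cij + cik + cil + cjk + cjl + ckl = 1 by lra.
have [Y AY [mi mj mk ml]] := orbit_closure_weights ijkl Aij ak bk al bl cij0 c0 csum relL relK.
exists Y; split=> //; apply/matrixP => o m; rewrite (ord1 o).
by case/or4P: (uniq4_cover ijkl m) => /eqP ->;
  [rewrite mi vi | rewrite mj vj | rewrite mk vk | rewrite ml vl].
Qed.

End Generic.

Theorem mainTheorem19 (R : realType) (A B : 'M[R[i]]_(4,2)) :
  is_frame A -> is_frame B ->
  orbit_polytope A <> @Delta42 R ->
  orbit_polytope B = orbit_polytope A ->
  in_torus_orbit A B.
Proof.
move=> fA fB notDelta sameB.
have supp x y : (pluecker A x y == 0) = (pluecker B x y == 0).
  have [<-|xy] := eqVneq x y; first by rewrite !pluecker_ii eqxx.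
  apply/idP/idP; apply: contraTT => /(orbit_polytope_delta _ xy).
  - by rewrite sameB => /(orbit_polytope_delta _ xy).
  - by rewrite -sameB => /(orbit_polytope_delta _ xy).
apply: same_support_orbit fA supp _.
apply: contra_notP notDelta => nondegenerate.
apply: generic_orbit_polytope => x y xy.
by apply/eqP => xy0; apply: nondegenerate; exists x, y.
Qed.
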